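(* Let $n$ be a positive integer, let $\alpha$ be a real number with $\frac{1}{2} \le \alpha < 1$, and let $\beta = 1-\alpha$. Suppose that $\frac{t_1}{A_1}, \frac{t_2}{A_2}, \dots, \frac{t_{n+1}}{A_{n+1}}$ are rational numbers, each of which is an $(n+3)$-bit underapproximation to $\beta$. Then the rational number \[ 1+\frac{t_1}{A_1}+\frac{t_1t_2}{A_1A_2}+\cdots+\prod_{i=1}^{n+1}\frac{t_i}{A_i} \] is an $n$-bit underapproximation to $\frac{1}{\alpha}$.
   Context: For a real number $\alpha$ and a positive integer $k$, a rational number $\alpha'$ is called a $k$-bit underapproximation to $\alpha$ if $0 \le \alpha - \alpha' \le \frac{1}{2^k}$. *)

From Stdlib Require Import Reals QArith Qreals.
Open Scope R_scope.

Definition underapprox (k : nat) (a' : Q) (alpha : R) : Prop :=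
  0 <= alpha - Q2R a' <= / 2 ^ k.

Fixpoint prodQ (q : nat -> Q) (j : nat) : Q :=
  match j with
  | O => 1%Q
  | S j' => (prodQ q j' * q j)%Q
  end.

Fixpoint partial_prod_sum (q : nat -> Q) (m : nat) : Q :=
  match m with
  | O => 1%Q
  | S m' => (partial_prod_sum q m' + prodQ q m)%Q
  end.

From Stdlib Require Import Reals QArith Qreals Lra Lia.
Open Scope R_scope.

(* With a := 1/alpha and beta := 1 - alpha we have a = 1 + beta a, so the
   Horner form s_m = 1 + x_1 (1 + x_2 (1 + ...)) of the sum is an iteration of
   r |-> 1 + x r, which approximates the contraction r |-> 1 + beta r of
   ratio beta <= 1/2.  Each step halves the error and adds at most
   eps a <= 2 eps when x is an eps-underapproximation of beta, so after m steps
   the error is at most 1/2^m + 4 eps. *)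

Lemma Q2R_1 : Q2R 1 = 1.
Proof. unfold Q2R; simpl; field. Qed.

Lemma Q2R_prodQ_S (q : nat -> Q) (l : nat) :
  Q2R (prodQ q (S l)) = Q2R (q 1%nat) * Q2R (prodQ (fun i => q (S i)) l).
Proof.
  induction l as [|l IH].
  - simpl; rewrite Q2R_mult, Q2R_1; ring.
  - change (prodQ q (S (S l))) with (prodQ q (S l) * q (S (S l)))%Q.
    change (prodQ (fun i => q (S i)) (S l))
      with (prodQ (fun i => q (S i)) l * q (S (S l)))%Q.
    rewrite !Q2R_mult, IH; ring.
Qed.

Lemma Q2R_partial_prod_sum_S (q : nat -> Q) (m : nat) :
  Q2R (partial_prod_sum q (S m))
  = 1 + Q2R (q 1%nat) * Q2R (partial_prod_sum (fun i => q (S i)) m).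
Proof.
  induction m as [|m IH].
  - change (partial_prod_sum q 1) with (1 + prodQ q 1)%Q.
    rewrite Q2R_plus, Q2R_prodQ_S; simpl; rewrite Q2R_1; ring.
  - change (partial_prod_sum q (S (S m)))
      with (partial_prod_sum q (S m) + prodQ q (S (S m)))%Q.
    change (partial_prod_sum (fun i => q (S i)) (S m))
      with (partial_prod_sum (fun i => q (S i)) m + prodQ (fun i => q (S i)) (S m))%Q.
    rewrite !Q2R_plus, IH, !Q2R_prodQ_S; ring.
Qed.

Lemma horner_step_error (alpha eps x s e : R) :
  / 2 <= alpha <= 1 -> 0 <= eps <= / 2 -> 1 - alpha - eps <= x <= 1 - alpha ->
  0 <= s <= / alpha -> / alpha - s <= e ->
  0 <= 1 + x * s <= / alpha /\ / alpha - (1 + x * s) <= e / 2 + 2 * eps.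
Proof.
  intros Halpha Heps Hx Hs He.
  set (a := / alpha) in *.
  assert (Haa : alpha * a = 1) by (unfold a; field; lra).
  assert (Ha : a <= 2).
  { unfold a; replace 2 with (/ / 2) by field; apply Rinv_le_contravar; lra. }
  assert (Hdecomp : a - (1 + x * s) = (1 - alpha) * (a - s) + (1 - alpha - x) * s)
    by nra.
  assert (Hcontr : (1 - alpha) * (a - s) <= e / 2) by nra.
  assert (Hperturb : 0 <= (1 - alpha - x) * s <= 2 * eps) by nra.
  repeat split; nra.
Qed.

Lemma partial_prod_sum_error (alpha eps : R) (q : nat -> Q) (m : nat) :
  / 2 <= alpha <= 1 -> 0 <= eps <= / 2 ->
  (forall i, (1 <= i <= m)%nat -> 1 - alpha - eps <= Q2R (q i) <= 1 - alpha) ->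
  0 <= Q2R (partial_prod_sum q m) <= / alpha /\
  / alpha - Q2R (partial_prod_sum q m) <= / 2 ^ m + 4 * eps.
Proof.
  intros Halpha Heps.
  revert q; induction m as [|m IH]; intros q Hq.
  - assert (1 <= / alpha <= 2).
    { split; [rewrite <- Rinv_1 | replace 2 with (/ / 2) by field];
        apply Rinv_le_contravar; lra. }
    simpl; rewrite Q2R_1; lra.
  - destruct (IH (fun i => q (S i))) as [Hs He].
    { intros i Hi; apply Hq; lia. }
    rewrite Q2R_partial_prod_sum_S.
    destruct (horner_step_error alpha eps (Q2R (q 1%nat)) _ _ Halpha Heps
                (Hq 1%nat ltac:(lia)) Hs He) as [Hs' He'].
    split; [exact Hs'|].
    replace (/ 2 ^ S m + 4 * eps) with ((/ 2 ^ m + 4 * eps) / 2 + 2 * eps)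
      by (simpl; field; apply pow_nonzero; lra).
    exact He'.
Qed.

(* q i stands for the rational t_i / A_i, for i = 1, ..., n+1. *)
Theorem lemma3p1 (n : nat) (alpha : R) (q : nat -> Q) :
  (1 <= n)%nat ->
  / 2 <= alpha < 1 ->
  (forall i : nat, (1 <= i <= n + 1)%nat -> underapprox (n + 3) (q i) (1 - alpha)) ->
  underapprox n (partial_prod_sum q (n + 1)) (/ alpha).
Proof.
  (* The estimate also holds for n = 0. *)
  intros _ Halpha Hq.
  assert (Hpow : 0 < 2 ^ n) by (apply pow_lt; lra).
  assert (Heps : 0 <= / 2 ^ (n + 3) <= / 2).
  { rewrite pow_add; split.
    - apply Rlt_le, Rinv_0_lt_compat; simpl; lra.
    - apply Rinv_le_contravar; [lra|].
      assert (1 <= 2 ^ n) by (apply pow_R1_Rle; lra); simpl; lra. }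
  destruct (partial_prod_sum_error alpha (/ 2 ^ (n + 3)) q (n + 1)
              ltac:(lra) Heps) as [Hsum Herr].
  { intros i Hi; destruct (Hq i Hi); split; lra. }
  replace (/ 2 ^ (n + 1) + 4 * / 2 ^ (n + 3)) with (/ 2 ^ n) in Herr
    by (rewrite !pow_add; simpl; field; lra).
  unfold underapprox; lra.
Qed.
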